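(* Let $\Omega\subset\mathbb{R}^2$ be open and bounded with Lipschitz boundary, let $f\in L^2(\Omega)$ be not identically zero, and for $\lambda_1,\lambda_2>0$ let $(u^*,v^* )\in BV(\Omega)\times L^2(\Omega)$ be an optimal pair for $$\min_{u\in BV(\Omega),\,v\in L^2(\Omega)}\Big\{|Du|(\Omega)+\lambda_1\|v\|_{L^1(\Omega)}+\frac{\lambda_2}{2}\|f-u-v\|_{L^2(\Omega)}^2\Big\}.$$ Then: (1) for fixed finite $\lambda_1$, $|Du^*|(\Omega)\to0$ and $v^*\to0$ in $L^1(\Omega)$ as $\lambda_2\to0$; (2) for fixed finite $\lambda_2$, $|Du^*|(\Omega)\to0$ and $v^*\to f-u^*$ in $L^2(\Omega)$ (i.e. $\|f-u^*-v^*\|_{L^2(\Omega)}\to0$) as $\lambda_1\to0$.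
   Context: $|Du|(\Omega)$ denotes the total variation of $u$ and $BV(\Omega)$ the space of functions of bounded variation; $(u^*,v^* )$ depends on $(\lambda_1,\lambda_2)$. *)

From HB Require Import structures.
From mathcomp Require Import all_boot all_order all_algebra.
From mathcomp Require Import all_classical all_reals all_analysis.
Set Implicit Arguments. Unset Strict Implicit. Unset Printing Implicit Defensive.
Import Order.TTheory GRing.Theory Num.Theory.
Import numFieldNormedType.Exports.
Local Open Scope classical_set_scope.
Local Open Scope ring_scope.

(* The plane R^2 is modelled as R * R, with the product topology and the
   product Lebesgue measure (lebesgue_measure \x lebesgue_measure). *)
Definition leb2 (R : realType) := ((@lebesgue_measure R) \x (@lebesgue_measure R))%E.

Definition enorm2 (R : realType) (x : R * R) : R := Num.sqrt (x.1 ^+ 2 + x.2 ^+ 2).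

Definition eball2 (R : realType) (c : R * R) (r : R) : set (R * R) :=
  [set y | enorm2 (y.1 - c.1, y.2 - c.2) < r].

Definition bounded2 (R : realType) (O : set (R * R)) : Prop :=
  exists M : R, forall x, O x -> enorm2 x <= M.

Definition lipschitz1 (R : realType) (g : R -> R) : Prop :=
  exists L : R, forall s t, `|g s - g t| <= L * `|s - t|.

Definition rot2 (R : realType) (th : R) (y : R * R) : R * R :=
  (cos th * y.1 - sin th * y.2, sin th * y.1 + cos th * y.2).

(* Lipschitz boundary: near every boundary point, after a rigid motion,
   O is the (strict) epigraph of a Lipschitz function. *)
Definition lipschitz_boundary (R : realType) (O : set (R * R)) : Prop :=
  forall x, (closure O `\` O) x ->
    exists (r : R) (th : R) (g : R -> R),
      0 < r /\ lipschitz1 g /\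
      forall y, eball2 x r y ->
        (O y <-> let z := rot2 th (y.1 - x.1, y.2 - x.2) in g z.1 < z.2).

Definition pd1 (R : realType) (p : R * R -> R) (x : R * R) : R :=
  derive1 (fun t : R => p (t, x.2)) x.1.
Definition pd2 (R : realType) (p : R * R -> R) (x : R * R) : R :=
  derive1 (fun t : R => p (x.1, t)) x.2.

Definition C1_2 (R : realType) (p : R * R -> R) : Prop :=
  (forall x : R * R, derivable (fun t : R => p (t, x.2)) x.1 1 /\
                     derivable (fun t : R => p (x.1, t)) x.2 1) /\
  continuous p /\ continuous (pd1 p) /\ continuous (pd2 p).

(* test fields for the total variation: phi = (p1, p2) in C^1_c(O; R^2),
   with |phi| <= 1 pointwise *)
Definition TV_test (R : realType) (O : set (R * R)) (p1 p2 : R * R -> R) : Prop :=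
  C1_2 p1 /\ C1_2 p2 /\
  compact (closure [set x | p1 x != 0 \/ p2 x != 0]) /\
  closure [set x | p1 x != 0 \/ p2 x != 0] `<=` O /\
  (forall x, enorm2 (p1 x, p2 x) <= 1).

Definition TV (R : realType) (O : set (R * R)) (u : R * R -> R) : \bar R :=
  ereal_sup [set r : \bar R | exists p1 p2, TV_test O p1 p2 /\
     r = (\int[(@leb2 R)]_(x in O) (u x * (pd1 p1 x + pd2 p2 x))%:E)%E].

Definition BV (R : realType) (O : set (R * R)) (u : R * R -> R) : Prop :=
  ((@leb2 R)).-integrable O (EFin \o u) /\ (TV O u < +oo)%E.

Definition L2 (R : realType) (O : set (R * R)) (v : R * R -> R) : Prop :=
  measurable_fun O v /\ (\int[(@leb2 R)]_(x in O) ((v x) ^+ 2)%:E < +oo)%E.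

Definition L1norm (R : realType) (O : set (R * R)) (v : R * R -> R) : \bar R :=
  (\int[(@leb2 R)]_(x in O) (`|v x|)%:E)%E.
Definition L2norm2 (R : realType) (O : set (R * R)) (w : R * R -> R) : \bar R :=
  (\int[(@leb2 R)]_(x in O) ((w x) ^+ 2)%:E)%E.

Definition energy (R : realType) (O : set (R * R)) (f : R * R -> R)
  (l1 l2 : R) (u v : R * R -> R) : \bar R :=
  (TV O u + l1%:E * L1norm O v + (l2 / 2)%:E * L2norm2 O (fun x => (f x - u x - v x)%R))%E.

Definition optimal_pair (R : realType) (O : set (R * R)) (f : R * R -> R)
  (l1 l2 : R) (u v : R * R -> R) : Prop :=
  BV O u /\ L2 O v /\
  forall u' v', BV O u' -> L2 O v' -> (energy O f l1 l2 u v <= energy O f l1 l2 u' v')%E.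

(* The optimal pair has energy at most that of the competitors (0, 0) and
   (0, f), i.e. at most (l2/2) ||f||_2^2 and at most l1 ||f||_1.  The three
   terms of the energy are nonnegative, so each is bounded by the vanishing
   parameter times a constant.  The only input from the geometry of O is that
   ||f||_1 is finite: a bounded open set has finite measure, and there
   L^2 embeds into L^1. *)
From HB Require Import structures.
From mathcomp Require Import all_boot all_order all_algebra.
From mathcomp Require Import all_classical all_reals all_analysis.
From mathcomp Require Import lra measurable_realfun.
Set Implicit Arguments. Unset Strict Implicit. Unset Printing Implicit Defensive.
Import Order.TTheory GRing.Theory Num.Theory.
Import numFieldNormedType.Exports.
Local Open Scope classical_set_scope.
Local Open Scope ring_scope.

Section energy_terms.
Context {R : realType} (O : set (R * R)).

Lemma TV_test_cst0 : TV_test O (fun _ => 0) (fun _ => 0).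
Proof.
have pd0 : pd1 (fun _ : R * R => 0 : R) = (fun _ => 0)
          /\ pd2 (fun _ : R * R => 0 : R) = (fun _ => 0).
  by split; apply/funext => x; rewrite /pd1 /pd2 derive1_cst.
have C1_0 : C1_2 (fun _ : R * R => 0 : R).
  split; first by move=> x; split; exact: derivable_cst.
  by rewrite pd0.1 pd0.2; split; [|split]; exact: cst_continuous.
have supp0 : [set x : R * R | (0 : R) != 0 \/ (0 : R) != 0] = set0.
  by apply/seteqP; split => x // /= [] /negP; rewrite eqxx.
split=> //; split=> //; rewrite supp0 closure0; split; first exact: compact0.
by split=> // x; rewrite /enorm2 /= expr0n /= addr0 sqrtr0 ler01.
Qed.

Lemma TV_ge0 u : (0 <= TV O u)%E.
Proof.
apply: ereal_sup_ubound; exists (fun _ => 0), (fun _ => 0).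
split; first exact: TV_test_cst0.
by rewrite integral0_eq // => x _; rewrite /pd1 /pd2 !derive1_cst addr0 mulr0.
Qed.

Lemma TV_cst0 : TV O (fun _ => 0) = 0%E.
Proof.
apply/eqP; rewrite eq_le TV_ge0 andbT.
apply: ge_ereal_sup => _ [p1 [p2 [_ ->]]].
by rewrite integral0_eq // => x _; rewrite mul0r.
Qed.

Lemma BV_cst0 : BV O (fun _ => 0).
Proof. by split; [exact: integrable0 | rewrite TV_cst0 ltry]. Qed.

Lemma L1norm_ge0 v : (0 <= L1norm O v)%E.
Proof. by apply: integral_ge0 => x _; rewrite lee_fin. Qed.

Lemma L2norm2_ge0 w : (0 <= L2norm2 O w)%E.
Proof. by apply: integral_ge0 => x _; rewrite lee_fin sqr_ge0. Qed.

Lemma L1norm_cst0 : L1norm O (fun _ => 0) = 0%E.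
Proof. by rewrite /L1norm integral0_eq // => x _; rewrite normr0. Qed.

Lemma L2norm2_eq0 w : (forall x, w x = 0) -> L2norm2 O w = 0%E.
Proof. by move=> w0; rewrite /L2norm2 integral0_eq // => x _; rewrite w0 expr0n. Qed.

Lemma L2_cst0 : L2 O (fun _ => 0).
Proof.
split; first exact: measurable_cst.
by rewrite -/(L2norm2 O _) L2norm2_eq0 ?ltry.
Qed.

End energy_terms.

Section energy_bounds.
Context {R : realType} (O : set (R * R)) (f : R * R -> R) (l1 l2 : R).
Hypotheses (l1_ge0 : 0 <= l1) (l2_ge0 : 0 <= l2).

Lemma energy_bounds_terms u v :
  let E := energy O f l1 l2 u v in
  [/\ (TV O u <= E)%E, (l1%:E * L1norm O v <= E)%E
    & ((l2 / 2)%:E * L2norm2 O (fun x => (f x - u x - v x)%R) <= E)%E].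
Proof.
have tv0 := TV_ge0 O u.
have t1 : (0 <= l1%:E * L1norm O v)%E by rewrite mule_ge0 ?lee_fin ?L1norm_ge0.
have t2 : (0 <= (l2 / 2)%:E * L2norm2 O (fun x => (f x - u x - v x)%R))%E.
  by rewrite mule_ge0 ?lee_fin ?divr_ge0 ?L2norm2_ge0.
rewrite /energy; split.
- by rewrite -addeA leeDl // adde_ge0.
- by rewrite addeAC leeDr // adde_ge0.
- by rewrite leeDr // adde_ge0.
Qed.

Lemma energy_cst0_cst0 :
  energy O f l1 l2 (fun _ => 0) (fun _ => 0) = ((l2 / 2)%:E * L2norm2 O f)%E.
Proof.
rewrite /energy TV_cst0 L1norm_cst0 mule0 !add0e.
by congr (_ * L2norm2 O _)%E; apply/funext => x; rewrite !subr0.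
Qed.

Lemma energy_cst0_f : energy O f l1 l2 (fun _ => 0) f = (l1%:E * L1norm O f)%E.
Proof.
rewrite /energy TV_cst0 L2norm2_eq0 ?mule0 ?adde0 ?add0e // => x.
by rewrite subr0 subrr.
Qed.

Lemma optimal_pair_energy_le_L2norm2 u v : optimal_pair O f l1 l2 u v ->
  (energy O f l1 l2 u v <= (l2 / 2)%:E * L2norm2 O f)%E.
Proof.
move=> [_ [_ opt]]; rewrite -energy_cst0_cst0.
exact: opt (BV_cst0 O) (L2_cst0 O).
Qed.

Lemma optimal_pair_energy_le_L1norm u v : L2 O f -> optimal_pair O f l1 l2 u v ->
  (energy O f l1 l2 u v <= l1%:E * L1norm O f)%E.
Proof.
move=> f2 [_ [_ opt]]; rewrite -energy_cst0_f.
exact: opt (BV_cst0 O) f2.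
Qed.

End energy_bounds.

Section finite_measure.
Context {R : realType}.

Definition rat_box (a1 b1 a2 b2 : rat) : set (R * R) :=
  `]ratr a1, ratr b1[ `*` `]ratr a2, ratr b2[.

Lemma measurable_rat_box a1 b1 a2 b2 : measurable (rat_box a1 b1 a2 b2).
Proof. by apply: measurableX; exact: measurable_itv. Qed.

Lemma open_rat_box_cover (O : set (R * R)) x : open O -> O x ->
  exists a1 b1 a2 b2, rat_box a1 b1 a2 b2 x /\ rat_box a1 b1 a2 b2 `<=` O.
Proof.
move=> oO /oO /nbhs_ballP[e /= e0 ballO].
have rat_between (s t : R) : s < t -> exists q : rat, s < ratr q < t.
  by move=> st; have [q] := rat_in_itvoo st; rewrite in_itv /=; exists q.
have [a1 /andP[a11 a12]] := rat_between (x.1 - e) x.1 ltac:(rewrite ltrBlDr ltrDl //).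
have [b1 /andP[b11 b12]] := rat_between x.1 (x.1 + e) ltac:(rewrite ltrDl //).
have [a2 /andP[a21 a22]] := rat_between (x.2 - e) x.2 ltac:(rewrite ltrBlDr ltrDl //).
have [b2 /andP[b21 b22]] := rat_between x.2 (x.2 + e) ltac:(rewrite ltrDl //).
exists a1, b1, a2, b2; split; first by split; rewrite /= in_itv /=; apply/andP.
move=> y [/=]; rewrite !in_itv /= => /andP[y11 y12] /andP[y21 y22].
by apply: ballO; split; rewrite /ball /= ltr_norml; apply/andP; split; lra.
Qed.

Lemma open_measurable_R2 (O : set (R * R)) : open O -> measurable O.
Proof.
move=> oO.
pose inner a1 b1 a2 b2 := [set x | rat_box a1 b1 a2 b2 x /\ rat_box a1 b1 a2 b2 `<=` O].
have -> : O = \bigcup_(q : (rat * rat) * (rat * rat)) inner q.1.1 q.1.2 q.2.1 q.2.2.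
  apply/seteqP; split => [x /(open_rat_box_cover oO)|x].
    by move=> [a1 [b1 [a2 [b2 xO]]]]; exists ((a1, b1), (a2, b2)).
  by move=> [q _ [xbox /(_ x xbox)]].
apply: countable_bigcupT_measurable => [|[[a1 b1] [a2 b2]]].
  exact: countableP.
rewrite /inner /=.
have [boxO|boxNO] := pselect (rat_box a1 b1 a2 b2 `<=` O).
  rewrite (_ : [set x | _ /\ _] = rat_box a1 b1 a2 b2); first exact: measurable_rat_box.
  by apply/seteqP; split => [y []|y ?].
by rewrite (_ : [set x | _ /\ _] = set0) //; apply/seteqP; split => [y []|].
Qed.

Lemma leb2_bounded_lt_pinfty (O : set (R * R)) :
  measurable O -> bounded2 O -> (leb2 O < +oo)%E.
Proof.
move=> mO [M OM]; set B := `]- (`|M| + 1), `|M| + 1[%classic : set R.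
have coord_lt x : O x -> `|x.1| < `|M| + 1 /\ `|x.2| < `|M| + 1.
  move=> /OM xM; have := ler_norm M; rewrite /enorm2 in xM.
  have le_sqrt (s t : R) : `|s| <= Num.sqrt (s ^+ 2 + t ^+ 2).
    by rewrite -sqrtr_sqr ler_sqrt ?addr_ge0 ?sqr_ge0 // lerDl sqr_ge0.
  have := le_sqrt x.1 x.2; have := le_sqrt x.2 x.1; rewrite addrC; lra.
have OB : O `<=` B `*` B.
  move=> x /coord_lt[]; rewrite !ltr_norml => /andP[? ?] /andP[? ?].
  by split; rewrite /B /= in_itv /=; apply/andP.
have mB : measurable B by exact: measurable_itv.
apply: (le_lt_trans (@le_measure _ _ _ (@leb2 R) O (B `*` B) _ _ OB)).
- by rewrite inE.
- by rewrite inE; exact: measurableX.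
change ((lebesgue_measure \x lebesgue_measure)%E (B `*` B) < +oo)%E.
rewrite product_measure1E //.
change (lebesgue_measure B * lebesgue_measure B < +oo)%E.
rewrite lebesgue_measure_itv /= lte_fin ifT; first by rewrite -EFinD -EFinM ltry.
by have := normr_ge0 M; lra.
Qed.

Lemma L2_L1norm_lt_pinfty (O : set (R * R)) f :
  measurable O -> (leb2 O < +oo)%E -> L2 O f -> (L1norm O f < +oo)%E.
Proof.
move=> mO Ofin [mf f2].
have norm_le r : `|r| <= 1 + r ^+ 2 :> R.
  have := sqr_ge0 (`|r| - 1); rewrite -[r ^+ 2]real_normK ?num_real //; nra.
apply: (le_lt_trans (@ge0_le_integral _ _ _ (@leb2 R) _ mO _
  (fun x => (1 + f x ^+ 2)%:E) _ _ _ _)).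
- by move=> x _; rewrite lee_fin.
- by apply/measurable_EFinP; exact: measurableT_comp (@normr_measurable R setT) mf.
- by apply/measurable_EFinP; apply: measurable_funD => //; exact: measurable_funX.
- by move=> x _; rewrite lee_fin norm_le.
under eq_integral do rewrite EFinD.
rewrite ge0_integralD //; last 2 first.
- by move=> x _; rewrite lee_fin sqr_ge0.
- by apply/measurable_EFinP; exact: measurable_funX.
by rewrite integral_cst // mul1e lte_add_pinfty.
Qed.

End finite_measure.

Lemma cvge_at_right0_linear_bound {R : realType} (g : R -> \bar R) (k K : R) :
  0 < k -> (forall l, 0 < l -> (0 <= g l)%E /\ (k%:E * g l <= (l * K)%:E)%E) ->
  g l @[l --> 0^'+] --> 0%E.
Proof.
move=> k0 gK.
apply: (@squeeze_cvge _ _ _ _ (cst 0%E) _ (fun l => (l * (K / k))%:E)).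
- near=> l.
  have l0 : 0 < l by near: l; exact: nbhs_right_gt.
  have [g0 gl] := gK l l0.
  rewrite /cst g0 (_ : l * (K / k) = k^-1 * (l * K)); last by rewrite mulrA mulrC.
  by rewrite EFinM lee_pdivlMl.
- exact: cvg_cst.
- apply/fine_cvgP; split; first by near=> l.
  rewrite -[X in _ --> X](mul0r (K / k)).
  by apply: cvgM; [exact: cvg_at_right_filter cvg_id | exact: cvg_cst].
Unshelve. all: end_near.
Qed.

Section vanishing_parameter.
Context {R : realType} (O : set (R * R)) (f : R * R -> R).

Lemma cvg_optimal_pair_l2_to0 l1 (sel : R -> (R * R -> R) * (R * R -> R)) :
  0 < l1 -> L2 O f ->
  (forall l2, 0 < l2 -> optimal_pair O f l1 l2 (sel l2).1 (sel l2).2) ->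
  (TV O (sel l2).1 @[l2 --> 0^'+] --> 0%E) /\
  (L1norm O (sel l2).2 @[l2 --> 0^'+] --> 0%E).
Proof.
move=> l10 [_ f2] opt; set c := fine (L2norm2 O f).
have Lf : L2norm2 O f = c%:E by rewrite fineK // ge0_fin_numE ?L2norm2_ge0.
have terms_le (l2 : R) (l20 : 0 < l2) :=
  energy_bounds_terms O f (ltW l10) (ltW l20) (sel l2).1 (sel l2).2.
have energy_le l2 : 0 < l2 ->
    (energy O f l1 l2 (sel l2).1 (sel l2).2 <= (l2 * (c / 2))%:E)%E.
  move=> l20; apply: le_trans (optimal_pair_energy_le_L2norm2 (opt _ l20)) _.
  by rewrite Lf -EFinM mulrAC -mulrA.
split.
- apply: (@cvge_at_right0_linear_bound _ _ 1 (c / 2)) => // l2 l20.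
  have [TV_le _ _] := terms_le _ l20.
  by rewrite TV_ge0 mul1e (le_trans TV_le (energy_le _ l20)).
- apply: (@cvge_at_right0_linear_bound _ _ l1 (c / 2)) => // l2 l20.
  have [_ L1_le _] := terms_le _ l20.
  by rewrite L1norm_ge0 (le_trans L1_le (energy_le _ l20)).
Qed.

Lemma cvg_optimal_pair_l1_to0 l2 (sel : R -> (R * R -> R) * (R * R -> R)) :
  (L1norm O f < +oo)%E -> 0 < l2 -> L2 O f ->
  (forall l1, 0 < l1 -> optimal_pair O f l1 l2 (sel l1).1 (sel l1).2) ->
  (TV O (sel l1).1 @[l1 --> 0^'+] --> 0%E) /\
  (L2norm2 O (fun x => f x - (sel l1).1 x - (sel l1).2 x) @[l1 --> 0^'+] --> 0%E).
Proof.
move=> f1 l20 f2 opt; set d := fine (L1norm O f).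
have Lf : L1norm O f = d%:E by rewrite fineK // ge0_fin_numE ?L1norm_ge0.
have terms_le (l1 : R) (l10 : 0 < l1) :=
  energy_bounds_terms O f (ltW l10) (ltW l20) (sel l1).1 (sel l1).2.
have energy_le l1 : 0 < l1 ->
    (energy O f l1 l2 (sel l1).1 (sel l1).2 <= (l1 * d)%:E)%E.
  move=> l10; apply: le_trans (optimal_pair_energy_le_L1norm f2 (opt _ l10)) _.
  by rewrite Lf -EFinM.
split.
- apply: (@cvge_at_right0_linear_bound _ _ 1 d) => // l1 l10.
  have [TV_le _ _] := terms_le _ l10.
  by rewrite TV_ge0 mul1e (le_trans TV_le (energy_le _ l10)).
- apply: (@cvge_at_right0_linear_bound _ _ (l2 / 2) d) => [|l1 l10].
    by rewrite divr_gt0.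
  have [_ _ L2_le] := terms_le _ l10.
  by rewrite L2norm2_ge0 (le_trans L2_le (energy_le _ l10)).
Qed.

End vanishing_parameter.

Theorem corollary5p1 (R : realType) (O : set (R * R)) (f : R * R -> R) :
  open O -> bounded2 O -> lipschitz_boundary O ->
  L2 O f -> ~ {ae (@leb2 R), forall x, O x -> f x = 0} ->
  (forall (l1 : R), 0 < l1 ->
     forall sel : R -> (R * R -> R) * (R * R -> R),
       (forall l2 : R, 0 < l2 -> optimal_pair O f l1 l2 (sel l2).1 (sel l2).2) ->
       (TV O (sel l2).1 @[l2 --> 0^'+] --> 0%E) /\
       (L1norm O (sel l2).2 @[l2 --> 0^'+] --> 0%E)) /\
  (forall (l2 : R), 0 < l2 ->
     forall sel : R -> (R * R -> R) * (R * R -> R),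
       (forall l1 : R, 0 < l1 -> optimal_pair O f l1 l2 (sel l1).1 (sel l1).2) ->
       (TV O (sel l1).1 @[l1 --> 0^'+] --> 0%E) /\
       (L2norm2 O (fun x => f x - (sel l1).1 x - (sel l1).2 x) @[l1 --> 0^'+] --> 0%E)).
Proof.
move=> oO bO _ f2 _.
have mO := open_measurable_R2 oO.
have f1 := L2_L1norm_lt_pinfty mO (leb2_bounded_lt_pinfty mO bO) f2.
split=> [l1 l10 sel opt | l2 l20 sel opt].
- exact: cvg_optimal_pair_l2_to0 l10 f2 opt.
- exact: cvg_optimal_pair_l1_to0 f1 l20 f2 opt.
Qed.
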